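(* Assume the standing hypotheses (H). There is $K_3\in L^4_{\mathfrak P}$ such that for every $(t,\mathbf x)\in\mathbf D$ and $\boldsymbol\zeta\in\mathbf Z$, $$|H_3(t,\mathbf x;\boldsymbol\zeta)-H_3(t,\mathbf x;\boldsymbol\zeta^0(\Sigma))|\le K_3(t,\mathbf x)\|\boldsymbol\zeta-\boldsymbol\zeta^0(\Sigma)\|\max\big(1,\|\boldsymbol\zeta-\boldsymbol\zeta^0(\Sigma)\|\big).$$
   Context: Setting. Fix $T>0$, $S_0>0$, $\Sigma_0>0$, $A_0\in\mathbb R$. $\Omega$: continuous paths $\omega=(\omega^S,\omega^\Sigma,\omega^A):[0,T]\to\mathbb R^3$ with $\omega_0=(S_0,\Sigma_0,A_0)$ (uniform topology, Borel $\sigma$-algebra $\mathcal F$); $S,\Sigma,A$ coordinate processes, $\mathbb F$ their raw filtration, $M_t=\sup_{u\le t}S_u$, $\mathbf X_t=(S_t,A_t,M_t,\Sigma_t)$. $\mathbf G=\mathbb R_+\times\mathbb R\times\mathbb R_+$, $\mathbf D^0=(0,T)\times\mathbf G\times\mathbb R_+$ (points $(t,\mathbf x)$, $\mathbf x=(S,A,M,\Sigma)$); $0<\underline\Sigma<\Sigma_0<\overline\Sigma$, $\mathbf D=(0,T)\times\mathbf G\times[\underline\Sigma,\overline\Sigma]$. $\|\cdot\|$ Euclidean norm, $\mathbf e_4$ fourth unit vector, $x^-=\max(-x,0)$. Call: $\mathcal C(t,S,\Sigma)$ with $\mathcal C_t+\frac12\Sigma^2S^2\mathcal C_{SS}=0$,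 $\mathcal C(T_{\mathsf C},S,\Sigma)=\mathsf C(S)$. $b^{\mathcal C}(t,\mathbf x;\boldsymbol\zeta)=\nu\mathcal C_\Sigma+\frac12S^2\mathcal C_{SS}(\sigma^2-\Sigma^2)+\sigma\eta S\mathcal C_{S\Sigma}+\frac12(\eta^2+\xi)\mathcal C_{\Sigma\Sigma}$ for $\boldsymbol\zeta=(\nu,\sigma,\eta,\xi)$. Models: $\mathfrak P^{00}$ = probability measures $P$ on $(\Omega,\mathcal F)$ with progressively measurable $\boldsymbol\zeta^P=(\nu^P,\sigma^P,\eta^P,\xi^P)$ such that $S$, $\Sigma-\int_0^\cdot\nu^P_tdt$ are continuous local $P$-martingales with $d\langle S\rangle_t=S_t^2(\sigma^P_t)^2dt$, $d\langle\Sigma\rangle_t=((\eta^P_t)^2+\xi^P_t)dt$, $d\langle S,\Sigma\rangle_t=S_t\sigma^P_t\eta^P_tdt$, $S,\Sigma>0$, $\xi^P\ge0$, $b^{\mathcal C}(t,\mathbf X_t;\boldsymbol\zeta^P_t)=0$ $dt\times P$-a.e.; for Borel $\alpha,\beta,\gamma,\delta:[0,T]\times\mathbb R^3\to\mathbb R$, $\mathfrak P^0$ = those $P$ with $dA_t=(\alpha+\frac12(\sigma^P_t)^2\beta)dt+\gamma dS_t+\delta dM_t$. $\boldsymbol\zeta^0(\Sigma)=(0,\Sigma,0,0)^\top$; reference model: $\boldsymbol\zeta^P_t=\boldsymbol\zeta^0(\Sigma_t)$ a.e. Non-traded option: $\mathcal V(\cdot,\Sigma)$ solves $\mathcal V_t+(\alpha+\frac12\beta\Sigma^2)\mathcal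 V_A+\frac12\Sigma^2S^2(\mathcal V_{SS}+2\gamma\mathcal V_{SA}+\gamma^2\mathcal V_{AA})=0$ on $(0,T)\times\mathbf G$, $\delta\mathcal V_A+\mathcal V_M=0$ on $\{S\ge M\}$, $\mathcal V(T,\cdot,\Sigma)=\mathsf V$. $\Delta=\mathcal V_S+\gamma\mathcal V_A$, $\Gamma=\mathcal V_{SS}+2\gamma\mathcal V_{SA}+\gamma^2\mathcal V_{AA}$, $\frac{\partial\Delta}{\partial\Sigma}:=\mathcal V_{S\Sigma}+\gamma\mathcal V_{A\Sigma}$. P&L: $V_t=\mathcal V(t,\mathbf X_t)$, $C_t=\mathcal C(t,S_t,\Sigma_t)$; strategies $\boldsymbol\upsilon=(\theta,\phi)$ real locally bounded progressive; $Y^{\boldsymbol\upsilon,P}_t=Y_0+V_0+\int_0^t\theta dS+\int_0^t\phi dC-V_t$. Preferences: $\Psi=\mathrm{diag}(\psi_\nu,\psi_\sigma,\psi_\eta,\psi_\xi)$, positive; a utility $U$, strategy set $\mathfrak Y$, model set $\mathfrak P\subset\mathfrak P^0$. Candidate control: $\mathbf c=(\mathcal C_\Sigma,\Sigma S^2\mathcal C_{SS},\Sigma S\mathcal C_{S\Sigma},\frac12\mathcal C_{\Sigma\Sigma})^\top$, $\mathbf v=(\mathcal V_\Sigma,\Sigma(\beta\mathcal V_A+S^2\Gamma),\Sigma S\frac{\partial\Delta}{\partial\Sigma},\frac12\mathcal V_{\Sigma\Sigma})^\top$; $\lambda=\frac{\mathbf c^\top\Psi\mathbf v}{\mathbf c^\top\Psi\mathbf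 c}$ if $\mathcal V_{\Sigma\Sigma}-\frac{\mathbf c^\top\Psi\mathbf v}{\mathbf c^\top\Psi\mathbf c}\mathcal C_{\Sigma\Sigma}\ge0$, else $\lambda=\frac{\mathbf c^\top\Psi\mathbf v-\frac14\mathcal C_{\Sigma\Sigma}\mathcal V_{\Sigma\Sigma}\psi_\xi}{\mathbf c^\top\Psi\mathbf c-\frac14\mathcal C_{\Sigma\Sigma}^2\psi_\xi}$; $\mu=\frac12(\mathcal V_{\Sigma\Sigma}-\lambda\mathcal C_{\Sigma\Sigma})^-$; $\widetilde{\boldsymbol\zeta}=\Psi(\mathbf v-\lambda\mathbf c+\mu\mathbf e_4)$; $\boldsymbol\zeta^\psi=\boldsymbol\zeta^0(\Sigma)+\widetilde{\boldsymbol\zeta}\mathbf 1_{\{\underline\Sigma<\Sigma<\overline\Sigma\}}\psi$; $\widetilde g=\mathbf v^\top\widetilde{\boldsymbol\zeta}$. Cash-equivalent PDE: for $\Sigma\in[\underline\Sigma,\overline\Sigma]$, $\widetilde w_t+(\alpha+\frac12\beta\Sigma^2)\widetilde w_A+\frac12\Sigma^2S^2(\widetilde w_{SS}+2\gamma\widetilde w_{SA}+\gamma^2\widetilde w_{AA})+\frac12\widetilde g(\cdot,\Sigma)=0$ on $(0,T)\times\mathbf G$, $\delta\widetilde w_A+\widetilde w_M=0$ on $\{S\ge M\}$, $\widetilde w(T,\cdot,\Sigma)=0$. $L^p_{\mathfrak P}$: Borel $K$ on $\mathbf D^0$ with $\sup_{P\in\mathfrak P}E^P[\int_0^T|K(t,\mathbf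 X_t)|^pdt]^{1/p}<\infty$. Candidate asymptotic model family: $(P^\psi)_{\psi\in(0,\psi_0)}\subset\mathfrak P$, $\psi_0\in(0,1)$, with $K_0\in L^4_{\mathfrak P}$ and $\|\boldsymbol\zeta^{P^\psi}_t-\boldsymbol\zeta^\psi(t,\mathbf X_t)\|\le K_0(t,\mathbf X_t)\psi^2$ $dt\times P^\psi$-a.e. Assumption (A): (a) $\exists K_{\mathfrak Y}$: $Y^{\boldsymbol\upsilon,P}>-K_{\mathfrak Y}$ $dt\times P$-a.e. for all $\boldsymbol\upsilon\in\mathfrak Y$, $P\in\mathfrak P$; (b) $\mathfrak P$ contains a candidate asymptotic model family and a reference model, and constants $\underline\nu<0<\overline\nu$, $0<\underline\sigma<\underline\Sigma$, $\overline\Sigma<\overline\sigma$, $\underline\eta<0<\overline\eta$, $\overline\xi>0$ bound $\nu^P,\sigma^P,\eta^P,\xi^P,\Sigma$ in $[\underline\nu,\overline\nu],[\underline\sigma,\overline\sigma],[\underline\eta,\overline\eta],[0,\overline\xi],[\underline\Sigma,\overline\Sigma]$ $dt\times P$-a.e. for all $P\in\mathfrak P$; (c) $T_{\mathsf C}\ge T$, $\mathcal C\in C^{1,2,2}((0,T_{\mathsf C})\times\mathbb R_+^2)\cap C([0,T_{\mathsf C}]\times\overline{\mathbb R}_+^2)$ solves the call PDE classically for $\Sigma\in[\underline\Sigma,\overline\Sigma]$, $\mathcal C_\Sigma\ne0$ and $|\mathcal C_{\Sigma\Sigma}|\le K_{\mathcal C}(|\mathcal C_\Sigma|+|S^2\mathcal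 C_{SS}|+|S\mathcal C_{S\Sigma}|)$ on $(0,T)\times\mathbb R_+\times[\underline\Sigma,\overline\Sigma]$ with $K_{\mathcal C}\in L^2_{\mathfrak P}$; (d) $\mathcal V\in C^{1,2,2,1,2}(\mathbf D^0)\cap C(\overline{\mathbf D^0})$ solves the $\mathcal V$-PDE classically for $\Sigma\in[\underline\Sigma,\overline\Sigma]$, $|\mathcal V_\Sigma|,|\beta\mathcal V_A+S^2\Gamma|,|S\frac{\partial\Delta}{\partial\Sigma}|,|\mathcal V_{\Sigma\Sigma}|\le K_{\mathcal V}$ on $\mathbf D$; (e) $\widetilde w\in C^{1,2,2,1,2}(\mathbf D^0)\cap C(\overline{\mathbf D^0})$ solves the cash-equivalent PDE classically for $\Sigma\in[\underline\Sigma,\overline\Sigma]$, $0\le\widetilde w\le K_{\widetilde w}$ on $\mathbf D$, and $\widetilde w_\Sigma,S(\widetilde w_S+\gamma\widetilde w_A),\beta\widetilde w_A+S^2(\widetilde w_{SS}+2\gamma\widetilde w_{SA}+\gamma^2\widetilde w_{AA}),S(\widetilde w_{S\Sigma}+\gamma\widetilde w_{A\Sigma}),\widetilde w_{\Sigma\Sigma}\in L^4_{\mathfrak P}$; (f) $U\in C^3(\mathbb R)$, $U'>0$, $U''<0$, $-U''/U'$ nonincreasing. Additional notation. $\mathbf Z=[\underline\nu,\overline\nu]\times[\underline\sigma,\overline\sigma]\times[\underline\eta,\overline\eta]\times[0,\overline\xi]$. $H_3(t,\mathbf x;\boldsymbol\zeta)=\nu\widetilde w_\Sigma+(\alpha+\frac12\beta\sigma^2)\widetilde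 w_A+\frac12\sigma^2S^2(\widetilde w_{SS}+2\gamma\widetilde w_{SA}+\gamma^2\widetilde w_{AA})+\sigma\eta S(\widetilde w_{S\Sigma}+\gamma\widetilde w_{A\Sigma})+\frac12(\eta^2+\xi)\widetilde w_{\Sigma\Sigma}$ for $\boldsymbol\zeta=(\nu,\sigma,\eta,\xi)$. Delta-vega hedge $\boldsymbol\upsilon^\star_t=(\Delta-\frac{\mathcal V_\Sigma}{\mathcal C_\Sigma}\mathcal C_S,\frac{\mathcal V_\Sigma}{\mathcal C_\Sigma})(t,\mathbf X_t)$. Standing hypotheses (H): Assumption (A) holds, $\boldsymbol\upsilon^\star\in\mathfrak Y$, and $(P^\psi)_{\psi\in(0,\psi_0)}\subset\mathfrak P$ is a candidate asymptotic model family. *)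

From HB Require Import structures.
From mathcomp Require Import all_boot all_order all_algebra.
From mathcomp Require Import all_classical all_reals all_analysis.
Set Implicit Arguments. Unset Strict Implicit. Unset Printing Implicit Defensive.
Import Order.TTheory GRing.Theory Num.Theory.
Import numFieldNormedType.Exports.
Local Open Scope classical_set_scope.
Local Open Scope ring_scope.

Section Defs.
Variable R : realType.

Definition st := (R * R * R * R)%type.
Definition xS (x : st) : R := x.1.1.1.
Definition xA (x : st) : R := x.1.1.2.
Definition xM (x : st) : R := x.1.2.
Definition xSg (x : st) : R := x.2.

Definition fun_tx := R -> st -> R.

Definition dS (w : fun_tx) : fun_tx :=
  fun t x => derive1 (fun s => w t (s, xA x, xM x, xSg x)) (xS x).
Definition dA (w : fun_tx) : fun_tx :=
  fun t x => derive1 (fun a => w t (xS x, a, xM x, xSg x)) (xA x).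
Definition dSg (w : fun_tx) : fun_tx :=
  fun t x => derive1 (fun sg => w t (xS x, xA x, xM x, sg)) (xSg x).

Definition D0set (T : R) : set (R * st) :=
  [set z | 0 < z.1 < T /\ 0 < xS z.2 /\ 0 < xM z.2 /\ 0 < xSg z.2].
Definition inD0 (T : R) (x : st) : Prop :=
  0 < xS x /\ 0 < xM x /\ 0 < xSg x.

Definition inD (T Slo Shi t : R) (x : st) : Prop :=
  0 < t < T /\ 0 < xS x /\ 0 < xM x /\ Slo <= xSg x <= Shi.

(* L^p_{\mathfrak P}: Borel on D^0 and
   sup_{P in PP} E^P[ \int_0^T |K(t, X_t)|^p dt ]^{1/p} < oo *)
Definition Lp_fam d (Om : measurableType d) (PP : set (probability Om R))
  (X : R -> Om -> st) (T p : R) (K : fun_tx) : Prop :=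
  measurable_fun (D0set T) (fun z : R * st => K z.1 z.2) /\
  let I : set R := `]0, T[%classic in
  exists C : R, forall P, PP P ->
    (\int[P]_w (\int[lebesgue_measure]_(t in I) ((`|K t (X t w)| `^ p)%:E))
      <= C%:E)%E.

Definition zeta_t := (R * R * R * R)%type.
Definition znu (z : zeta_t) : R := z.1.1.1.
Definition zsig (z : zeta_t) : R := z.1.1.2.
Definition zeta (z : zeta_t) : R := z.1.2.
Definition zxi (z : zeta_t) : R := z.2.

Definition zeta0 (Sg : R) : zeta_t := (0, Sg, 0, 0).

Definition zdist (z z' : zeta_t) : R :=
  Num.sqrt ((znu z - znu z') ^+ 2 + (zsig z - zsig z') ^+ 2
            + (zeta z - zeta z') ^+ 2 + (zxi z - zxi z') ^+ 2).

Definition inZ (nulo nuhi siglo sighi etalo etahi xihi : R) (z : zeta_t) : Prop :=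
  nulo <= znu z <= nuhi /\ siglo <= zsig z <= sighi /\
  etalo <= zeta z <= etahi /\ 0 <= zxi z <= xihi.

Definition coef := R -> (R * R * R) -> R.
Definition sam (x : st) : R * R * R := (xS x, xA x, xM x).

Definition H3 (alpha beta gamma : coef) (w : fun_tx) (t : R) (x : st)
  (z : zeta_t) : R :=
  let g := gamma t (sam x) in
  let S := xS x in
  znu z * dSg w t x
  + (alpha t (sam x) + 2^-1 * beta t (sam x) * zsig z ^+ 2) * dA w t x
  + 2^-1 * zsig z ^+ 2 * S ^+ 2 *
      (dS (dS w) t x + 2 * g * dS (dA w) t x + g ^+ 2 * dA (dA w) t x)
  + zsig z * zeta z * S * (dS (dSg w) t x + g * dA (dSg w) t x)
  + 2^-1 * (zeta z ^+ 2 + zxi z) * dSg (dSg w) t x.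

End Defs.

From HB Require Import structures.
From mathcomp Require Import all_boot all_order all_algebra.
From mathcomp Require Import all_classical all_reals all_analysis.
From mathcomp Require Import measurable_realfun ring lra.
Set Implicit Arguments. Unset Strict Implicit. Unset Printing Implicit Defensive.
Import Order.TTheory GRing.Theory Num.Theory.
Import numFieldNormedType.Exports.
Local Open Scope classical_set_scope.
Local Open Scope ring_scope.

(* H_3 is affine in nu, sigma^2, sigma eta and eta^2 + xi, so H_3(zeta) - H_3(zeta0(Sigma))
   is a combination of four derivative expressions of w~ (all in L^4) with weights
   nu, (sigma^2 - Sigma^2)/2, sigma eta and (eta^2 + xi)/2.  On the box Z, with Sigma
   and sigma bounded, each weight is at most a constant times
   |zeta - zeta0| max(1, |zeta - zeta0|).  One may therefore take for K_3 a constant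
   times the l^4-norm of the four expressions: its fourth power is the sum of their
   fourth powers, hence it lies in L^4. *)

Lemma ge0_le_integral_nonmeas d (T : measurableType d) (R : realType)
    (mu : {measure set T -> \bar R}) (D : set T) (f g : T -> \bar R) :
  (forall x, D x -> (0 <= f x)%E) -> (forall x, D x -> (f x <= g x)%E) ->
  (\int[mu]_(x in D) f x <= \int[mu]_(x in D) g x)%E.
Proof.
move=> f0 fg.
have g0 x : D x -> (0 <= g x)%E by move=> Dx; exact: le_trans (f0 _ Dx) (fg _ Dx).
rewrite !ge0_integralE //.
apply: ge_ereal_sup => _ [h hf <-]; apply: ereal_sup_ubound; exists h => //= x.
apply: le_trans (hf x) _; rewrite /patch; case: ifP => // /[!inE] Dx; exact: fg.
Qed.

Section path_Lp.
Variables (R : realType) (d : measure_display) (Om : measurableType d).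
Variables (PP : set (probability Om R)) (X : R -> Om -> st R) (T p : R).
Hypothesis mX : measurable_fun setT (fun z : R * Om => X z.1 z.2).
Hypothesis p_gt0 : 0 < p.

Lemma measurable_D0set : measurable (D0set T).
Proof.
have -> : D0set T = `]0, T[ `*` (`]0, +oo[ `*` setT `*` `]0, +oo[ `*` `]0, +oo[).
  apply/seteqP; split => -[t [[[? ?] ?] ?]];
    rewrite /D0set /xS /xM /xSg /= !in_itv /= !andbT; tauto.
by apply: measurableX; rewrite ?measurable_itv //;
  do 3 apply: measurableX => //; exact: measurable_itv.
Qed.

(* Members of L^p are only measurable on D^0, so integrands along the paths are
   truncated to D^0; accordingly the functions built below vanish off D^0. *)
Definition path_pow (f : fun_tx R) (z : R * Om) : R :=
  ((fun y : R * st R => `|f y.1 y.2| `^ p) \_ (D0set T)) (z.1, X z.1 z.2).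

Lemma path_pow_ge0 f z : 0 <= path_pow f z.
Proof. by rewrite /path_pow /patch; case: ifP => // _; exact: powR_ge0. Qed.

Lemma path_pow_le f z : path_pow f z <= `|f z.1 (X z.1 z.2)| `^ p.
Proof. by rewrite /path_pow /patch; case: ifP => // _; exact: powR_ge0. Qed.

Lemma measurable_path_pow (f : fun_tx R) :
  measurable_fun (D0set T) (fun z => f z.1 z.2) -> measurable_fun setT (path_pow f).
Proof.
move=> mf; apply: measurableT_comp (measurable_fun_pair measurable_fst mX).
apply/(measurable_restrictT _ measurable_D0set).
exact: measurableT_comp (measurable_powR p) (measurableT_comp (@normr_measurable R setT) mf).
Qed.

Lemma measurable_path_pow1 (f : fun_tx R) (w : Om) :
  measurable_fun (D0set T) (fun z => f z.1 z.2) ->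
  measurable_fun setT (fun t => path_pow f (t, w)).
Proof. by move=> mf; exact: measurable_fun_pair1 (measurable_path_pow mf). Qed.

Definition path_int (f : fun_tx R) (w : Om) : \bar R :=
  (\int[lebesgue_measure]_(t in `]0%R, T[) (path_pow f (t, w))%:E)%E.

Lemma path_int_ge0 f w : (0 <= path_int f w)%E.
Proof. by apply: integral_ge0 => t _; rewrite lee_fin path_pow_ge0. Qed.

Lemma measurable_path_int (f : fun_tx R) :
  measurable_fun (D0set T) (fun z => f z.1 z.2) -> measurable_fun setT (path_int f).
Proof.
move=> mf.
have -> : path_int f = fubini_G lebesgue_measure (EFin \o path_pow f).
  apply/funext => w; rewrite /path_int integral_mkcond /fubini_G.
  apply: eq_integral => t _; rewrite /patch /=; case: ifPn => // /negP tI.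
  rewrite /path_pow /patch; case: ifPn => // /[!inE] -[t0T _].
  by exfalso; apply: tI; rewrite inE /= in_itv /= t0T.
apply: measurable_fun_fubini_tonelli_G.
  by apply/measurable_EFinP; exact: measurable_path_pow.
by move=> z; rewrite /= lee_fin path_pow_ge0.
Qed.

Lemma integral_path_int_le (f : fun_tx R) (P : probability Om R) :
  (\int[P]_w path_int f w <=
   \int[P]_w \int[lebesgue_measure]_(t in `]0%R, T[) (`|f t (X t w)| `^ p)%:E)%E.
Proof.
apply: ge0_le_integral_nonmeas => w _; first exact: path_int_ge0.
apply: ge0_le_integral_nonmeas => t _; first by rewrite lee_fin path_pow_ge0.
by rewrite lee_fin; exact: (path_pow_le f (t, w)).
Qed.

Section dominated.
Variables (n : nat) (f : 'I_n -> fun_tx R) (c : R) (K : fun_tx R).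
Hypothesis c_ge0 : 0 <= c.

Lemma pow_path_le_sum :
  (forall t x, ~ D0set T (t, x) -> K t x = 0) ->
  (forall t x, D0set T (t, x) -> `|K t x| `^ p <= c * \sum_i `|f i t x| `^ p) ->
  forall t w, `|K t (X t w)| `^ p <= c * \sum_i path_pow (f i) (t, w).
Proof.
move=> K0 Kf t w; have [D0 | nD0] := pselect (D0set T (t, X t w)).
  rewrite (eq_bigr (fun i => `|f i t (X t w)| `^ p)) ?Kf // => i _.
  by rewrite /path_pow /patch /= mem_set.
rewrite K0 // normr0 powR0 ?gt_eqF // mulr_ge0 // sumr_ge0 // => i _.
exact: path_pow_ge0.
Qed.

Lemma time_integral_le_sum (w : Om) :
  (forall i, measurable_fun (D0set T) (fun z => f i z.1 z.2)) ->
  (forall t, `|K t (X t w)| `^ p <= c * \sum_i path_pow (f i) (t, w)) ->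
  (\int[lebesgue_measure]_(t in `]0%R, T[) (`|K t (X t w)| `^ p)%:E <=
    c%:E * \sum_i path_int (f i) w)%E.
Proof.
move=> mf Kf.
have mI : measurable (`]0%R, T[%classic : set R) := measurable_itv _.
have mfw i : measurable_fun (`]0%R, T[%classic : set R)
    (fun t => (path_pow (f i) (t, w))%:E).
  apply/measurable_EFinP; apply: (measurable_funS measurableT) => //.
  exact: measurable_path_pow1.
have pp0 i t : (`]0%R, T[%classic : set R) t -> (0 <= (path_pow (f i) (t, w))%:E)%E.
  by rewrite lee_fin path_pow_ge0.
have -> : (c%:E * \sum_i path_int (f i) w =
    \int[lebesgue_measure]_(t in `]0%R, T[)
      (c%:E * \sum_i (path_pow (f i) (t, w))%:E))%E.
  rewrite ge0_integralZl_EFin ?ge0_integral_sum //.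
  - by move=> t It; apply: sume_ge0 => i _; exact: pp0.
  - exact: emeasurable_sum.
apply: ge0_le_integral_nonmeas => t _; first by rewrite lee_fin powR_ge0.
by rewrite sumEFin -EFinM lee_fin Kf.
Qed.

Lemma Lp_fam_dominated :
  measurable_fun (D0set T) (fun z => K z.1 z.2) ->
  (forall t x, ~ D0set T (t, x) -> K t x = 0) ->
  (forall t x, D0set T (t, x) -> `|K t x| `^ p <= c * \sum_i `|f i t x| `^ p) ->
  (forall i, Lp_fam PP X T p (f i)) -> Lp_fam PP X T p K.
Proof.
move=> mK K0 Kf Lpf; split => //.
have mf i : measurable_fun (D0set T) (fun z => f i z.1 z.2) := (Lpf i).1.
have [C hC] := choice (fun i => (Lpf i).2).
exists (c * \sum_i C i) => P PP_P.
apply: le_trans (_ : _ <= \int[P]_w (c%:E * \sum_i path_int (f i) w))%E _.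
  apply: ge0_le_integral_nonmeas => w _.
    by apply: integral_ge0 => t _; rewrite lee_fin powR_ge0.
  exact: time_integral_le_sum mf (pow_path_le_sum K0 Kf ^~ w).
rewrite ge0_integralZl_EFin //; last 2 first.
- by move=> w _; apply: sume_ge0 => i _; exact: path_int_ge0.
- by apply: emeasurable_sum => i; exact: measurable_path_int.
rewrite ge0_integral_sum //; last 2 first.
- by move=> i; exact: measurable_path_int.
- by move=> i w _; exact: path_int_ge0.
rewrite EFinM -sumEFin lee_wpmul2l ?lee_fin // lee_sum // => i _.
exact: le_trans (integral_path_int_le _ _) (hC i P PP_P).
Qed.

End dominated.

Definition lpnorm_D0 (n : nat) (f : 'I_n -> fun_tx R) : fun_tx R :=
  fun t x => if (t, x) \in D0set T then (\sum_i `|f i t x| `^ p) `^ p^-1 else 0.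

Lemma Lp_fam_lpnorm_D0 (n : nat) (f : 'I_n -> fun_tx R) (c : R) :
  (forall i, Lp_fam PP X T p (f i)) ->
  Lp_fam PP X T p (fun t x => c * lpnorm_D0 f t x).
Proof.
move=> Lpf; have mf i := (Lpf i).1.
apply: (Lp_fam_dominated (powR_ge0 `|c| p)) => //.
- apply: (@eq_measurable_fun _ _ _ _ _
    (fun z => c * (\sum_i `|f i z.1 z.2| `^ p) `^ p^-1)).
    by move=> [t x] /set_mem D0; rewrite /lpnorm_D0 mem_set.
  apply: measurable_funM; first exact: measurable_cst.
  apply: measurableT_comp (measurable_powR _) _; apply: measurable_sum => i.
  apply: measurableT_comp (measurable_powR _) _.
  exact: measurableT_comp (@normr_measurable R setT) (mf i).
- by move=> t x nD0; rewrite /lpnorm_D0 memNset // mulr0.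
move=> t x D0; rewrite /lpnorm_D0 mem_set //.
have sum0 : 0 <= \sum_i `|f i t x| `^ p by apply: sumr_ge0 => i _; exact: powR_ge0.
by rewrite normrM powRM // (ger0_norm (powR_ge0 _ _)) -powRrM mulVf ?gt_eqF // powRr1 //.
Qed.

End path_Lp.

Definition w_gamma (R : realType) (beta gamma : coef R) (w : fun_tx R) : fun_tx R :=
  fun t x => beta t (sam x) * dA w t x + xS x ^+ 2 *
    (dS (dS w) t x + 2 * gamma t (sam x) * dS (dA w) t x
     + gamma t (sam x) ^+ 2 * dA (dA w) t x).

Definition w_vanna (R : realType) (gamma : coef R) (w : fun_tx R) : fun_tx R :=
  fun t x => xS x * (dS (dSg w) t x + gamma t (sam x) * dA (dSg w) t x).

Lemma H3_sub_zeta0 (R : realType) (alpha beta gamma : coef R) (w : fun_tx R) t x z :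
  H3 alpha beta gamma w t x z - H3 alpha beta gamma w t x (zeta0 (xSg x)) =
  znu z * dSg w t x + 2^-1 * (zsig z ^+ 2 - xSg x ^+ 2) * w_gamma beta gamma w t x
  + zsig z * zeta z * w_vanna gamma w t x
  + 2^-1 * (zeta z ^+ 2 + zxi z) * dSg (dSg w) t x.
Proof.
rewrite /H3 /w_gamma /w_vanna /zeta0 /znu /zsig /zeta /zxi /=.
move: (dSg w t x) (dA w t x) (dS (dS w) t x) (dS (dA w) t x) (dA (dA w) t x)
  (dS (dSg w) t x) (dA (dSg w) t x) (dSg (dSg w) t x) => *.
ring.
Qed.

Lemma coord_le_zdist (R : realType) (z z' : zeta_t R) :
  [/\ `|znu z - znu z'| <= zdist z z', `|zsig z - zsig z'| <= zdist z z',
      `|zeta z - zeta z'| <= zdist z z' & `|zxi z - zxi z'| <= zdist z z'].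
Proof.
rewrite /zdist; set a := znu z - _; set b := zsig z - _; set c := zeta z - _.
set e := zxi z - _.
have := sqr_ge0 a; have := sqr_ge0 b; have := sqr_ge0 c; have := sqr_ge0 e.
by split; rewrite -sqrtr_sqr ler_wsqrtr //; lra.
Qed.

Lemma norm_le_lpnorm (R : realType) (n : nat) (a : 'I_n -> R) (p : R) (i : 'I_n) :
  0 < p -> `|a i| <= (\sum_j `|a j| `^ p) `^ p^-1.
Proof.
move=> p0.
have -> : `|a i| = (`|a i| `^ p) `^ p^-1.
  by rewrite -powRrM mulfV ?gt_eqF // powRr1.
have sum_ge0 : 0 <= \sum_j `|a j| `^ p by apply: sumr_ge0 => j _; exact: powR_ge0.
apply: ge0_ler_powR; rewrite ?invr_ge0 ?(ltW p0) ?nnegrE ?powR_ge0 //.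
by rewrite (bigD1 i) //= lerDl sumr_ge0 // => j _; exact: powR_ge0.
Qed.

Lemma norm_H3_increment_le (R : realFieldType)
    (nu sg e xi Sg a1 a3 a4 a5 M sighi Shi d : R) :
  0 < sg -> sg <= sighi -> 0 < Sg -> Sg <= Shi -> 0 <= xi ->
  `|a1| <= M -> `|a3| <= M -> `|a4| <= M -> `|a5| <= M ->
  `|nu| <= d -> `|sg - Sg| <= d -> `|e| <= d -> `|xi| <= d ->
  `|nu * a1 + 2^-1 * (sg ^+ 2 - Sg ^+ 2) * a3 + sg * e * a4
     + 2^-1 * (e ^+ 2 + xi) * a5|
  <= (2 + 2 * sighi + Shi) * M * d * Num.max 1 d.
Proof.
move=> sg0 sgh Sg0 Sgh xi0 h1 h3 h4 h5 hnu hsg he hxi.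
have d0 : 0 <= d := le_trans (normr_ge0 _) hnu.
have M0 : 0 <= M := le_trans (normr_ge0 _) h1.
have half : `|2^-1 : R| = 2^-1 by rewrite ger0_norm // invr_ge0 ler0n.
have -> : (2 + 2 * sighi + Shi) * M * d * Num.max 1 d =
          (2 + 2 * sighi + Shi) * (d * Num.max 1 d * M) by ring.
have dY : d <= d * Num.max 1 d by rewrite ler_peMr // le_max lexx.
have d2Y : d ^+ 2 <= d * Num.max 1 d by rewrite expr2 ler_wpM2l // le_max lexx orbT.
move: (d * Num.max 1 d) dY d2Y => Y dY d2Y.
have Y0 : 0 <= Y := le_trans d0 dY.
have T1 : `|nu * a1| <= Y * M.
  by rewrite normrM; exact: ler_pM (normr_ge0 _) (normr_ge0 _) (le_trans hnu dY) h1.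
have T3 : `|2^-1 * (sg ^+ 2 - Sg ^+ 2) * a3| <= 2^-1 * (Y * (sighi + Shi) * M).
  have sgSg0 : 0 <= sg + Sg by rewrite ltW // addr_gt0.
  have -> : `|2^-1 * (sg ^+ 2 - Sg ^+ 2) * a3| = 2^-1 * (`|sg - Sg| * (sg + Sg) * `|a3|).
    rewrite (_ : sg ^+ 2 - Sg ^+ 2 = (sg - Sg) * (sg + Sg)); last by ring.
    by rewrite !normrM half (ger0_norm sgSg0); ring.
  rewrite ler_wpM2l ?invr_ge0 ?ler0n //.
  apply: ler_pM (mulr_ge0 (normr_ge0 _) sgSg0) (normr_ge0 _) _ h3.
  exact: ler_pM (normr_ge0 _) sgSg0 (le_trans hsg dY) (lerD sgh Sgh).
have T4 : `|sg * e * a4| <= sighi * Y * M.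
  rewrite !normrM (gtr0_norm sg0).
  apply: ler_pM (mulr_ge0 (ltW sg0) (normr_ge0 _)) (normr_ge0 _) _ h4.
  exact: ler_pM (ltW sg0) (normr_ge0 _) sgh (le_trans he dY).
have T5 : `|2^-1 * (e ^+ 2 + xi) * a5| <= Y * M.
  have exi0 : 0 <= 2^-1 * (e ^+ 2 + xi) by rewrite mulr_ge0 ?invr_ge0 ?ler0n ?addr_ge0 ?sqr_ge0.
  rewrite normrM (ger0_norm exi0); apply: ler_pM exi0 (normr_ge0 _) _ h5.
  have e2 : e ^+ 2 <= d ^+ 2 by rewrite -real_normK ?num_real // lerXn2r ?nnegrE.
  have : xi <= d by rewrite -(ger0_norm xi0).
  lra.
have sighi0 : 0 <= sighi * Y * M by rewrite !mulr_ge0 // ltW // (lt_le_trans sg0).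
have Shi0 : 0 <= Y * Shi * M by rewrite !mulr_ge0 // ltW // (lt_le_trans Sg0).
apply: le_trans (ler_normD _ _) _.
apply: le_trans (lerD (le_trans (ler_normD _ _) (lerD (ler_normD _ _) (lexx _))) (lexx _)) _.
lra.
Qed.

Theorem proposition5p10
  (R : realType) (d : measure_display) (Om : measurableType d)
  (PP : set (probability Om R)) (X : R -> Om -> st R)
  (T Sigma0 Slo Shi nulo nuhi siglo sighi etalo etahi xihi : R)
  (alpha beta gamma : coef R) (w : fun_tx R) (Kw : R)
  (* constants *)
  (hT : 0 < T)
  (hS : 0 < Slo < Sigma0) (hS' : Sigma0 < Shi)
  (hnu : nulo < 0 < nuhi) (hsig : 0 < siglo < Slo) (hsig' : Shi < sighi)
  (heta : etalo < 0 < etahi) (hxi : 0 < xihi)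
  (* Borel coefficients *)
  (halpha : measurable_fun setT (fun z : R * (R * R * R) => alpha z.1 z.2))
  (hbeta : measurable_fun setT (fun z : R * (R * R * R) => beta z.1 z.2))
  (hgamma : measurable_fun setT (fun z : R * (R * R * R) => gamma z.1 z.2))
  (* the state process: jointly measurable, a.s. in D^0 on (0,T) *)
  (hXm : measurable_fun setT (fun z : R * Om => X z.1 z.2))
  (hXD : forall P, PP P ->
     {ae P, forall om, forall t, 0 < t < T -> inD0 T (X t om)})
  (* Assumption (A)(e), integrability and bounds on w~ *)
  (hw0 : forall t x, inD T Slo Shi t x -> 0 <= w t x <= Kw)
  (hw1 : Lp_fam PP X T 4 (dSg w))
  (hw2 : Lp_fam PP X T 4 (fun t x => xS x * (dS w t x + gamma t (sam x) * dA w t x)))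
  (hw3 : Lp_fam PP X T 4 (fun t x => beta t (sam x) * dA w t x + xS x ^+ 2 *
           (dS (dS w) t x + 2 * gamma t (sam x) * dS (dA w) t x
            + gamma t (sam x) ^+ 2 * dA (dA w) t x)))
  (hw4 : Lp_fam PP X T 4 (fun t x => xS x *
           (dS (dSg w) t x + gamma t (sam x) * dA (dSg w) t x)))
  (hw5 : Lp_fam PP X T 4 (dSg (dSg w))) :
  exists K3 : fun_tx R, Lp_fam PP X T 4 K3 /\
    forall t x, inD T Slo Shi t x ->
    forall z, inZ nulo nuhi siglo sighi etalo etahi xihi z ->
      `|H3 alpha beta gamma w t x z - H3 alpha beta gamma w t x (zeta0 (xSg x))|
        <= K3 t x * zdist z (zeta0 (xSg x))
                  * Num.max 1 (zdist z (zeta0 (xSg x))).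
Proof.
case/andP: hS => Slo_gt0 _; case/andP: hsig => siglo_gt0 _.
have four_gt0 : 0 < 4 :> R by rewrite ltr0n.
pose a : 'I_4 -> fun_tx R :=
  nth (dSg w) [:: dSg w; w_gamma beta gamma w; w_vanna gamma w; dSg (dSg w)].
exists (fun t x => (2 + 2 * sighi + Shi) * lpnorm_D0 T 4 a t x); split.
  (* plain [exact]: ssreflect's [exact:] gets lost unfolding [derive1] *)
  apply: (Lp_fam_lpnorm_D0 hXm four_gt0) => -[[|[|[|[|i]]]] i_lt];
    [exact hw1 | exact hw3 | exact hw4 | exact hw5 | by exfalso; rewrite !ltnS ltn0 in i_lt].
move=> t x [/andP[t_gt0 t_ltT] [S_gt0 [M_gt0 /andP[Sg_lo Sg_hi]]]].
move=> z [_ [/andP[sg_lo sg_hi] [_ /andP[xi_ge0 _]]]].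
have D0 : D0set T (t, x) by split; [apply/andP | do 2 split => //; lra].
rewrite H3_sub_zeta0 /lpnorm_D0 mem_set //.
have le_a i : `|a i t x| <= (\sum_j `|a j t x| `^ 4) `^ 4^-1.
  exact: norm_le_lpnorm (fun j => a j t x) 4 i four_gt0.
have := coord_le_zdist z (zeta0 (xSg x)); rewrite /= !subr0 => -[dnu dsg de dxi].
have sg_gt0 : 0 < zsig z by lra.
have Sg_gt0 : 0 < xSg x by lra.
exact: (norm_H3_increment_le sg_gt0 sg_hi Sg_gt0 Sg_hi xi_ge0
  (le_a (@Ordinal 4 0 isT)) (le_a (@Ordinal 4 1 isT)) (le_a (@Ordinal 4 2 isT))
  (le_a (@Ordinal 4 3 isT)) dnu dsg de dxi).
Qed.
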